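(* Let $\delta>0$, let $T$ be a positive integer, and let $\Gamma$ be $\beta$-regular with constants $0<c_0<C_0$. Then $$\mathbb{E}_\Gamma\Bigl[\mathbf 1(\mu<1-3\delta)\min\Bigl(1+\frac{1}{1-2\delta-\mu},\,T(1-\mu)\Bigr)\Bigr]\le C_0\cdot\begin{cases}5+\log(1/\delta),&\beta=1,\\ C(\beta),&\beta>1,\\ C(\beta)\min(\sqrt T,1/\delta)^{1-\beta},&\beta<1,\end{cases}$$ where $C(\beta)$ is a constant depending only on $\beta$.
   Context: A distribution $\Gamma$ on $[0,1]$ is $\beta$-regular if there exist constants $0<c_0<C_0$ such that $c_0\epsilon^\beta\le\mathbb{P}_\Gamma(\mu>1-\epsilon)\le\mathbb{P}_\Gamma(\mu\ge1-\epsilon)\le C_0\epsilon^\beta$ for all $\epsilon\in(0,1]$. $\mathbb{E}_\Gamma$ denotes expectation over $\mu\sim\Gamma$. *)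

From HB Require Import structures.
From mathcomp Require Import all_boot all_order all_algebra.
From mathcomp Require Import all_classical all_reals all_analysis.
Set Implicit Arguments. Unset Strict Implicit. Unset Printing Implicit Defensive.
Import Order.TTheory GRing.Theory Num.Theory.
Local Open Scope classical_set_scope.
Local Open Scope ring_scope.

(* A distribution Gamma on [0,1] is modelled as a probability measure on the
   Borel sets of R giving mass 1 to [0,1]. *)
Definition on_unit_interval (R : realType) (G : probability R R) : Prop :=
  G `[0, 1]%classic = 1%E.

Definition beta_regular (R : realType) (G : probability R R)
    (beta c0 C0 : R) : Prop :=
  on_unit_interval G /\ 0 < c0 /\ c0 < C0 /\
  forall eps : R, 0 < eps -> eps <= 1 ->
    (((c0 * eps `^ beta)%R)%:E <= G `](1 - eps)%R, +oo[%classic)%E /\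
    (G `](1 - eps)%R, +oo[%classic <= G `[(1 - eps)%R, +oo[%classic)%E /\
    (G `[(1 - eps)%R, +oo[%classic <= ((C0 * eps `^ beta)%R)%:E)%E.

Definition lemma9_integrand (R : realType) (delta : R) (T : nat) (mu : R) : R :=
  if mu < 1 - 3 * delta then
    Order.min (1 + 1 / (1 - 2 * delta - mu)) (T%:R * (1 - mu))
  else 0.

Definition lemma9_lhs (R : realType) (G : probability R R) (delta : R) (T : nat)
  : \bar R :=
  (\int[G]_mu (lemma9_integrand delta T mu)%:E)%E.

From HB Require Import structures.
From mathcomp Require Import all_boot all_order all_algebra.
From mathcomp Require Import all_classical all_reals all_analysis.
From mathcomp Require Import measurable_realfun ring lra.
Import Order.TTheory GRing.Theory Num.Theory.
Local Open Scope ring_scope.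

(** A layer-cake estimate: for thresholds [t_0 <= t_1 <= ...] such that
    [{g > t_j}] lies in the tail [[1 - e_j, +oo[],
    [E g <= t_0 + sum_j (t_(j+1) - t_j) P(mu >= 1 - e_j)].
    The integrand exceeds [1 + k] only where [1 - 2 delta - mu < 1/k], so
    beta-regularity bounds the tail masses by [C0 e_j^beta] with
    [e_j = 1/k + 2 delta] or [e_j = 3/k].  Unit thresholds up to [1/delta] give
    a harmonic sum, whence the [log(1/delta)] for [beta = 1].  Dyadic thresholds
    [t_j = 3 2^j] give layer masses [C0 (3/2)^beta (2^(1-beta))^j]: a geometric
    series, convergent for [beta > 1] and dominated by its last term for
    [beta < 1], where [2^j] is of order [min(sqrt T, 1/delta)] because the
    integrand never exceeds [1 + 3 min(sqrt T, 1/delta)]. *)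

Section integrand.
Context {R : realType} (delta : R) (T : nat).
Local Notation g := (lemma9_integrand delta T).

Lemma integrand_ge0 mu : 0 < delta -> 0 <= g mu.
Proof.
move=> delta_gt0.
rewrite /lemma9_integrand; case: ifPn => // mu_lt.
have den_gt0 : 0 < 1 - 2 * delta - mu by lra.
by rewrite le_min addr_ge0 ?divr_ge0 ?(ltW den_gt0) //= mulr_ge0 //; lra.
Qed.

Lemma integrand_eq0 mu : 1 - 3 * delta <= mu -> g mu = 0.
Proof. by move=> mu_ge; rewrite /lemma9_integrand ltNge mu_ge. Qed.

Lemma integrand_le_harmonic mu : mu < 1 - 3 * delta ->
  g mu <= 1 + 1 / (1 - 2 * delta - mu).
Proof. by move=> mu_lt; rewrite /lemma9_integrand mu_lt ge_min lexx. Qed.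

Lemma integrand_le_linear mu : mu < 1 - 3 * delta -> g mu <= T%:R * (1 - mu).
Proof. by move=> mu_lt; rewrite /lemma9_integrand mu_lt ge_min lexx orbT. Qed.

Lemma integrand_lt mu : 0 < delta -> g mu < 1 + 1 / delta.
Proof.
move=> delta_gt0.
have inv_gt0 : 0 < 1 / delta by rewrite divr_gt0.
case: (ltP mu (1 - 3 * delta)) => [mu_lt|mu_ge]; last first.
  by rewrite integrand_eq0 //; lra.
apply: (le_lt_trans (integrand_le_harmonic _ mu_lt)).
by rewrite ltrD2l !div1r ltf_pV2 ?posrE //; lra.
Qed.

Lemma integrand_le_sqrt mu : 0 < delta -> g mu <= 1 + 3 * Num.sqrt T%:R.
Proof.
move=> delta_gt0.
set s := Num.sqrt T%:R; have s_ge0 : 0 <= s by apply: sqrtr_ge0.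
case: (ltP mu (1 - 3 * delta)) => [mu_lt|mu_ge]; last first.
  by rewrite integrand_eq0 // addr_ge0 // mulr_ge0.
have den_gt0 : 0 < 1 - 2 * delta - mu by lra.
case: (leP (s * (1 - mu)) 1) => [sx_le1|sx_gt1].
  have sT : T%:R = s * s by rewrite -expr2 sqr_sqrtr.
  have : s * (s * (1 - mu)) <= s by rewrite -[leRHS]mulr1 ler_wpM2l.
  by have := integrand_le_linear _ mu_lt; rewrite sT -mulrA; lra.
apply: (le_trans (integrand_le_harmonic _ mu_lt)); rewrite lerD2l ler_pdivrMr //.
have : s * (1 - mu) <= s * (3 * (1 - 2 * delta - mu)) by rewrite ler_wpM2l //; lra.
lra.
Qed.

Lemma integrand_le_min mu : 0 < delta ->
  g mu <= 1 + 3 * Order.min (Num.sqrt T%:R) (1 / delta).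
Proof.
move=> delta_gt0; have [sqrt_le|sqrt_gt] := leP (Num.sqrt T%:R) (1 / delta).
  exact: integrand_le_sqrt.
apply/ltW/(lt_le_trans (integrand_lt _ delta_gt0)).
by rewrite lerD2l ler_peMl ?ler1n //; apply/ltW/divr_gt0.
Qed.

Lemma integrand_gt1D k mu : 0 < delta -> 0 < k -> 1 + k < g mu ->
  mu < 1 - 3 * delta /\ 1 - 2 * delta - mu < 1 / k.
Proof.
move=> delta_gt0 k_gt0 gt1k.
have mu_lt : mu < 1 - 3 * delta.
  by rewrite ltNge; apply/negP => /integrand_eq0 g0; move: gt1k; rewrite g0; lra.
have den_gt0 : 0 < 1 - 2 * delta - mu by lra.
split => //; rewrite ltr_pdivlMr // mulrC -ltr_pdivlMr //.
by have := integrand_le_harmonic _ mu_lt; lra.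
Qed.

Lemma integrand_gt1D_tail k mu : 0 < delta -> 0 < k -> 1 + k < g mu ->
  1 - mu < 1 / k + 2 * delta.
Proof. by move=> delta_gt0 k_gt0 /(integrand_gt1D _ _ delta_gt0 k_gt0) []; lra. Qed.

Lemma integrand_gt1D_tail3 k mu : 0 < delta -> 0 < k -> 1 + k < g mu ->
  1 - mu < 3 / k.
Proof.
move=> delta_gt0 k_gt0 /(integrand_gt1D _ _ delta_gt0 k_gt0) [mu_lt den_lt].
have : 3 * (1 - 2 * delta - mu) < 3 * (1 / k) by rewrite ltr_pM2l.
by rewrite mulrA mulr1; lra.
Qed.

Lemma measurable_integrand : 0 < delta -> measurable_fun setT g.
Proof.
move=> delta_gt0.
(* Capping the denominator makes [f1] monotone on all of [R]; the cap is
   inactive where the integrand is not zero. *)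
pose f1 (mu : R) := 1 + 1 / Num.max (1 - 2 * delta - mu) delta.
pose f2 (mu : R) := T%:R * (1 - mu).
have -> : g = fun mu => if mu < 1 - 3 * delta then (f1 \min f2) mu else 0.
  apply: funext => mu; rewrite /lemma9_integrand; case: ifPn => // mu_lt.
  by rewrite /f1 /f2 /= (max_idPl _) //; lra.
apply: measurable_fun_ifT; last exact: measurable_cst.
  by apply: measurable_fun_ltr; [exact: measurable_id | exact: measurable_cst].
apply: measurable_minr.
- apply: nondecreasing_measurable => // x y xy; rewrite /f1 lerD2l !div1r.
  rewrite lef_pV2 ?posrE ?lt_max ?delta_gt0 ?orbT //.
  by rewrite ge_max !le_max lexx orbT andbT; apply/orP; left; lra.
- by apply: nonincreasing_measurable => // x y xy; rewrite /f2 ler_wpM2l //; lra.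
Qed.

End integrand.

Section numeric_bounds.
Context {R : realType}.

Lemma powR_ge1 (x r : R) : 1 <= x -> 0 <= r -> 1 <= x `^ r.
Proof.
move=> x_ge1 r_ge0; have := @ge0_ler_powR _ r r_ge0 1 x.
by rewrite powR1 /=; apply; rewrite ?nnegrE //; lra.
Qed.

Lemma powR_lt1 (a r : R) : 1 < a -> r < 0 -> a `^ r < 1.
Proof.
move=> a_gt1 r_lt0; have a_ge0 : 0 <= a by lra.
rewrite lt_neqAle powR_eq1 gt_eqF //= ltNge a_ge0 lt_eqF //=.
by rewrite -[leRHS](powRr0 a) ler_powR ?ltW.
Qed.

Lemma powR_gt1 (a r : R) : 1 < a -> 0 < r -> 1 < a `^ r.
Proof.
move=> a_gt1 r_gt0; have a_ge0 : 0 <= a by lra.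
rewrite lt_neqAle eq_sym powR_eq1 gt_eqF //= ltNge a_ge0 gt_eqF //=.
by rewrite -[leLHS](powRr0 a) ler_powR ?ltW.
Qed.

Lemma powR_exprn (x r : R) (n : nat) : 0 <= x -> (x ^+ n) `^ r = (x `^ r) ^+ n.
Proof.
move=> x_ge0.
by rewrite -powR_mulrn // -powRrM mulrC powRrM powR_mulrn // powR_ge0.
Qed.

Lemma dyadic_layer_mass (beta : R) (j : nat) :
  2 ^+ j * (3 / 2 ^+ j.+1) `^ beta = (3 / 2) `^ beta * (2 `^ (1 - beta)) ^+ j.
Proof.
have -> : 3 / 2 ^+ j.+1 = 3 / 2 * 2^-1 ^+ j :> R by rewrite exprS invfM exprVn mulrA.
rewrite powRM ?divr_ge0 ?exprn_ge0 ?invr_ge0 // powR_exprn ?invr_ge0 //.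
rewrite mulrCA -exprMn; congr (_ * _ ^+ j).
rewrite -powR_inv1 // -powRrM mulN1r -{1}(@powRr1 _ 2) //.
by rewrite -powRD ?pnatr_eq0 ?implybT.
Qed.

Lemma sum_harmonic_le_ln (K : nat) : (0 < K)%N ->
  \sum_(i < K) (i.+1%:R : R)^-1 <= 1 + ln (K%:R : R).
Proof.
case: K => // K _; elim: K => [|K IHK]; first by rewrite big_ord1 /= invr1 ln1 addr0.
rewrite big_ord_recr /=.
have K1_gt0 : 0 < K.+1%:R :> R by rewrite ltr0n.
have K2_gt0 : 0 < K.+2%:R :> R by rewrite ltr0n.
suff : K.+2%:R^-1 <= ln (K.+2%:R : R) - ln (K.+1%:R : R).
  by move=> /(lerD IHK) /le_trans; apply; lra.
have inv_lt1 : - K.+2%:R^-1 > -1 :> R by rewrite ltrN2 invf_lt1 // ltr1n.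
have := le_ln1Dx inv_lt1.
have -> : 1 - K.+2%:R^-1 = K.+1%:R / K.+2%:R :> R by field; rewrite lt0r_neq0.
by rewrite ln_div ?posrE // lerNr opprB.
Qed.

Lemma sum_exprS_le_lt1 (q : R) (n : nat) : 0 <= q -> q < 1 ->
  \sum_(i < n) q ^+ i.+1 <= q / (1 - q).
Proof.
move=> q_ge0 q_lt1; rewrite ler_pdivlMr; last lra.
under eq_bigr do rewrite exprS.
rewrite -mulr_sumr -mulrA [X in q * X]mulrC -opprB mulNr -subrX1 opprB.
by rewrite ler_piMr // gerBl exprn_ge0.
Qed.

Lemma sum_exprS_le_gt1 (q : R) (n : nat) : 1 < q ->
  \sum_(i < n) q ^+ i.+1 <= q ^+ n.+1 / (q - 1).
Proof.
move=> q_gt1; rewrite ler_pdivlMr; last lra.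
under eq_bigr do rewrite exprS.
rewrite -mulr_sumr -mulrA [X in q * X]mulrC -subrX1 exprS.
by apply: ler_wpM2l; [lra | rewrite gerBl].
Qed.

Lemma exists_expr2_le_lt (M : R) : 1 <= M -> exists n, 2 ^+ n <= M < 2 ^+ n.+1.
Proof.
move=> M_ge1; have m_gt0 : (0 < Num.truncn M)%N by rewrite truncn_gt0.
have /andP[lo hi] := trunc_log_bounds (isT : (1 < 2)%N) m_gt0.
exists (trunc_log 2 (Num.truncn M)); rewrite -!natrX; apply/andP; split.
  apply: le_trans (_ : (Num.truncn M)%:R <= M); rewrite ?ler_nat //.
  by rewrite truncn_le; lra.
by apply: lt_le_trans (truncnS_gt M) _; rewrite ler_nat.
Qed.

End numeric_bounds.

Lemma min_le_layer_sum {R : realType} (t : nat -> R) :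
  (forall j, t j <= t j.+1) -> forall (v : R) (N : nat),
  Order.min v (t N) <=
    t 0%N + \sum_(j < N) (t j.+1 - t j) * (if t j < v then 1 else 0).
Proof.
move=> t_incr v; elim=> [|N IHN].
  by rewrite big_ord0 addr0 ge_min lexx orbT.
rewrite big_ord_recr /= addrA.
case: (ltP (t N) v) => [tN_lt|v_le]; last first.
  rewrite mulr0 addr0 (min_idPl v_le) in IHN *.
  by rewrite (min_idPl (le_trans v_le (t_incr N))).
rewrite (min_idPr (ltW tN_lt)) mulr1 in IHN *.
by rewrite ge_min; apply/orP; right; lra.
Qed.

Section layer_cake.
Context d (T : measurableType d) (R : realType) (P : probability T R).
Local Open Scope classical_set_scope.

Lemma layer_cake_le (A : set T) (g : T -> R) (t : nat -> R) (S : nat -> set T)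
    (N : nat) :
  measurable A -> P A = 1%E -> measurable_fun setT g -> (forall x, 0 <= g x) ->
  0 <= t 0%N -> (forall j, t j <= t j.+1) -> (forall j, measurable (S j)) ->
  (forall x, A x -> g x <= t N) ->
  (forall (j : nat) x, (j < N)%N -> A x -> t j < g x -> S j x) ->
  (\int[P]_x (g x)%:E <=
     (t 0%N)%:E + \sum_(j < N) ((t j.+1 - t j)%:E * P (S j)))%E.
Proof.
move=> mA PA1 mg g_ge0 t0_ge0 t_incr mS g_le g_gt.
have dt_ge0 j : 0 <= t j.+1 - t j by rewrite subr_ge0.
pose layer j x := (t j.+1 - t j) * \1_(S j) x.
have layer_ge0 j x : 0 <= layer j x by rewrite mulr_ge0 // indicE.
have mlayer j : measurable_fun setT (EFin \o layer j).
  by apply/measurable_EFinP/measurable_funM => //; exact: measurable_indic.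
have mlayers : measurable_fun setT (fun x => \sum_(j < N) (layer j x)%:E).
  by apply: emeasurable_sum => j; exact: mlayer.
have layers_ge0 x : [set: T] x -> (0 <= \sum_(j < N) (layer j x)%:E)%E.
  by move=> _; rewrite sume_ge0 // => j _; rewrite lee_fin.
have g_le_layers : {ae P, forall x, [set: T] x ->
    ((g x)%:E <= (t 0%N)%:E + \sum_(j < N) (layer j x)%:E)%E}.
  exists (~` A); split; first exact: measurableC.
    by rewrite (probability_setC _ mA) PA1 subee.
  move=> x /= /[swap] Ax; apply=> _; rewrite sumEFin lee_fin.
  rewrite -(min_idPl (g_le x Ax)).
  apply: (le_trans (min_le_layer_sum _ t_incr (g x) N)).
  rewrite lerD2l; apply: ler_sum => j _; rewrite ler_wpM2l // indicE.
  by case: ltP => // /(g_gt j x (ltn_ord j) Ax) Sjx; rewrite mem_set.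
apply: le_trans (ae_ge0_le_integral _ _ _ _ _ g_le_layers) _ => //.
- by move=> x _; rewrite lee_fin.
- exact/measurable_EFinP.
- by move=> x _; rewrite adde_ge0 ?layers_ge0.
- exact: emeasurable_funD.
rewrite ge0_integralD //.
rewrite integral_cst //= probability_setT mule1 leeD2l //.
rewrite ge0_integral_sum //; last 2 first.
- by move=> j; exact: mlayer.
- by move=> j x _; rewrite lee_fin.
apply: lee_sum => j _; under eq_integral do rewrite /= EFinM.
rewrite ge0_integralZl_EFin //; last exact/measurable_EFinP/measurable_indic.
by rewrite integral_indic // setIT.
Qed.

End layer_cake.

Section beta_regular.
Context {R : realType} {G : probability R R} {beta c0 C0 : R}.
Hypothesis G_regular : beta_regular G beta c0 C0.

Lemma beta_regular_C0_ge1 : 1 <= C0.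
Proof.
case: G_regular => G01 [_ [_ tail]]; have [_ [_]] := tail 1 ltr01 (lexx _).
rewrite powR1 mulr1 subrr -lee_fin -G01; apply: le_trans.
by apply: le_measure; rewrite ?inE //= => x; rewrite /= !in_itv /= => /andP[->].
Qed.

Lemma beta_regular_tail_le (e : R) : 0 < e -> e <= 1 ->
  (G `[(1 - e)%R, +oo[%classic <= (C0 * e `^ beta)%:E)%E.
Proof.
move=> e_gt0 e_le1; case: G_regular => _ [_ [_ tail]].
by case: (tail e e_gt0 e_le1) => _ [].
Qed.

Lemma beta_regular_tail_le_ge0 (e : R) : 0 <= beta -> 0 < e ->
  (G `[(1 - e)%R, +oo[%classic <= (C0 * e `^ beta)%:E)%E.
Proof.
move=> beta_ge0 e_gt0; case: (leP e 1) => [e_le1|e_gt1].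
  exact: beta_regular_tail_le.
apply: le_trans (probability_le1 _ _) _ => //; rewrite lee_fin.
rewrite -[1]mulr1 ler_pM //; first exact: beta_regular_C0_ge1.
by rewrite powR_ge1 // ltW.
Qed.

End beta_regular.

Section layer_bounds.
Context {R : realType} {delta : R} {T : nat} {G : probability R R}.
Hypothesis delta_gt0 : 0 < delta.
Local Notation g := (lemma9_integrand delta T).

Lemma lemma9_lhs_layer_cake (t : nat -> R) (e : nat -> R) (N : nat) :
  on_unit_interval G -> 0 <= t 0%N -> (forall j, t j <= t j.+1) ->
  (forall mu : R, 0 <= mu -> g mu <= t N) ->
  (forall (j : nat) (mu : R), (j < N)%N -> 0 <= mu -> t j < g mu -> 1 - e j <= mu) ->
  (lemma9_lhs G delta T <= (t 0%N)%:E +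
     \sum_(j < N) ((t j.+1 - t j)%:E * G `[(1 - e j)%R, +oo[%classic))%E.
Proof.
move=> G01 t0_ge0 t_incr g_le g_gt.
apply: (@layer_cake_le _ _ _ G `[0, 1]%classic _ t
  (fun j => `[(1 - e j)%R, +oo[%classic)) => //.
- exact: measurable_integrand.
- by move=> mu; exact: integrand_ge0.
- by move=> mu; rewrite /= in_itv /= => /andP[mu_ge0 _]; exact: g_le.
- move=> j mu j_lt; rewrite /= in_itv /= => /andP[mu_ge0 _].
  by move=> /(g_gt j mu j_lt mu_ge0); rewrite /= in_itv /= andbT.
Qed.

Lemma lemma9_lhs_le0 : 1 <= 3 * delta -> on_unit_interval G ->
  (lemma9_lhs G delta T <= 0)%E.
Proof.
move=> delta_ge G01.
apply: le_trans (lemma9_lhs_layer_cake (fun=> 0) (fun=> 0) 0 G01 _ _ _ _) _ => //.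
- by move=> mu mu_ge0; rewrite integrand_eq0 //; lra.
- by rewrite big_ord0 adde0.
Qed.

Lemma lemma9_lhs_le_harmonic {c0 C0 : R} : beta_regular G 1 c0 C0 ->
  (lemma9_lhs G delta T <=
     (2 + C0 * \sum_(i < Num.truncn (1 / delta)) (i.+1%:R^-1 + 2 * delta))%:E)%E.
Proof.
move=> G_reg; have G01 : on_unit_interval G by case: G_reg.
set K := Num.truncn (1 / delta).
pose e (j : nat) : R := if (j < 2)%N then 2 else j.-1%:R^-1 + 2 * delta.
apply: le_trans (lemma9_lhs_layer_cake (fun j => j%:R) e K.+2 G01 _ _ _ _) _ => //.
- by move=> j; rewrite ler_nat.
- move=> mu _; apply/ltW/(lt_le_trans (integrand_lt _ _ _ delta_gt0)).
  by rewrite -natr1 addrC lerD2r ltW // truncnS_gt.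
- move=> j mu _ mu_ge0 g_gt; rewrite /e; case: ltnP => [_|]; first lra.
  case: j g_gt => [|[|i]] // g_gt _ /=.
  have gt1D : 1 + i.+1%:R < g mu by rewrite addrC natr1.
  have := integrand_gt1D_tail _ _ _ _ delta_gt0 (ltr0Sn _ i) gt1D.
  by rewrite div1r => /ltW; rewrite !lerBlDr addrC.
have width1 j : ((j.+1%:R - j%:R : R)%:E * G `[(1 - e j)%R, +oo[%classic =
    G `[(1 - e j)%R, +oo[%classic)%E by rewrite -natr1 addrAC subrr add0r mul1e.
rewrite add0e (eq_bigr _ (fun j : 'I_K.+2 => fun _ => width1 j)) 2!big_ord_recl /=.
have tail_le (i : 'I_K) : (G `[(1 - e (bump 0 (bump 0 i)))%R, +oo[%classic <=
    (C0 * (i.+1%:R^-1 + 2 * delta))%:E)%E.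
  rewrite /e /bump /= !add1n /= add0n -[X in C0 * X]powRr1; last first.
    by rewrite addr_ge0 ?invr_ge0 // mulr_ge0 // ltW.
  apply: (beta_regular_tail_le_ge0 G_reg _ ler01).
  by rewrite ltr_wpDl ?invr_ge0 // mulr_gt0.
apply: le_trans.
  apply: leeD; first exact: probability_le1.
  apply: leeD; first exact: probability_le1.
  by apply: lee_sum => i _; exact: tail_le.
by rewrite sumEFin -!EFinD lee_fin -mulr_sumr addrA.
Qed.

Lemma lemma9_lhs_le_dyadic {beta c0 C0 : R} {N : nat} :
  beta_regular G beta c0 C0 -> (forall mu : R, g mu <= 3 * 2 ^+ N.+1) ->
  (lemma9_lhs G delta T <= (6 + 3 * C0 * (3 / 2) `^ beta *
     \sum_(i < N) (2 `^ (1 - beta)) ^+ i.+1)%:E)%E.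
Proof.
move=> G_reg g_le; have G01 : on_unit_interval G by case: G_reg.
pose e (j : nat) : R := if j == 0%N then 2 else 3 / 2 ^+ j.+1.
apply: le_trans (lemma9_lhs_layer_cake (fun j => 3 * 2 ^+ j) e N.+1 G01 _ _ _ _) _.
- by rewrite mulr_ge0 // exprn_ge0.
- by move=> j; rewrite ler_wpM2l // exprS ler_peMl // ?exprn_ge0 // ler1n.
- by move=> mu _; exact: g_le.
- move=> j mu _ mu_ge0 g_gt; rewrite /e; case: j g_gt => [|i] g_gt /=; first lra.
  have gt1D : 1 + 2 ^+ i.+2 < g mu.
    apply: le_lt_trans g_gt; rewrite [2 ^+ i.+2]exprS.
    have : 1 <= 2 ^+ i.+1 :> R by rewrite exprn_ege1 // ler1n.
    by set p := (2 ^+ i.+1 : R) => ?; lra.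
  have k_gt0 : 0 < 2 ^+ i.+2 :> R by exact: exprn_gt0.
  move: (integrand_gt1D_tail3 _ _ _ _ delta_gt0 k_gt0 gt1D) => /ltW.
  by rewrite !lerBlDr addrC.
rewrite big_ord_recl /=.
have first_layer : ((3 * 2 ^+ 1 - 3 * 2 ^+ 0)%:E * G `[(1 - e 0%N)%R, +oo[%classic
    <= 3%:E)%E.
  have -> : 3 * 2 ^+ 1 - 3 * 2 ^+ 0 = 3 :> R by rewrite expr1 expr0; lra.
  by rewrite -[leRHS]mule1 lee_wpmul2l ?lee_fin // probability_le1.
have layer_le (i : 'I_N) :
    ((3 * 2 ^+ (bump 0 i).+1 - 3 * 2 ^+ bump 0 i)%:E *
      G `[(1 - e (bump 0 i))%R, +oo[%classic <=
    (3 * C0 * (3 / 2) `^ beta * (2 `^ (1 - beta)) ^+ i.+1)%:E)%E.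
  rewrite /bump /= add1n /e /=.
  have -> : 3 * 2 ^+ i.+2 - 3 * 2 ^+ i.+1 = 3 * 2 ^+ i.+1 :> R.
    by rewrite [2 ^+ i.+2]exprS; ring.
  have e_gt0 : 0 < 3 / 2 ^+ i.+2 :> R by rewrite divr_gt0 // exprn_gt0.
  have e_le1 : 3 / 2 ^+ i.+2 <= 1 :> R.
    rewrite ler_pdivrMr ?exprn_gt0 // mul1r !exprS mulrA.
    have : 1 <= 2 ^+ i :> R by rewrite exprn_ege1 // ler1n.
    by set p := (2 ^+ i : R) => ?; lra.
  apply: le_trans (lee_wpmul2l _ (beta_regular_tail_le G_reg _ e_gt0 e_le1)) _.
    by rewrite lee_fin mulr_ge0 // exprn_ge0.
  by rewrite -EFinM lee_fin -[leRHS]mulrA -dyadic_layer_mass mulrACA.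
apply: le_trans.
  apply: leeD; first exact: lexx.
  apply: leeD; first exact: first_layer.
  by apply: lee_sum => i _; exact: layer_le.
rewrite sumEFin -!EFinD lee_fin expr0 mulr1 -mulr_sumr addrA.
by have -> : 3 + 3 = 6 :> R by lra.
Qed.

End layer_bounds.

Section lemma9_cases.
Context {R : realType}.

Lemma lemma9_beta_eq1 (delta : R) (T : nat) (G : probability R R) (c0 C0 : R) :
  0 < delta -> delta < 1 -> beta_regular G 1 c0 C0 ->
  (lemma9_lhs G delta T <= (C0 * (5 + ln (1 / delta)))%:E)%E.
Proof.
move=> delta_gt0 delta_lt1 G_reg.
apply: le_trans (lemma9_lhs_le_harmonic delta_gt0 G_reg) _; rewrite lee_fin.
have C0_ge1 := beta_regular_C0_ge1 G_reg.
have inv_gt1 : 1 < 1 / delta by rewrite ltr_pdivlMr // mul1r.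
set K := Num.truncn (1 / delta).
have K_gt0 : (0 < K)%N by rewrite truncn_gt0 ltW.
have K_le : K%:R <= 1 / delta by rewrite truncn_le; lra.
have harmonic_le : \sum_(i < K) (i.+1%:R : R)^-1 <= 1 + ln (1 / delta).
  apply: le_trans (sum_harmonic_le_ln _ K_gt0) _.
  by rewrite lerD2l ler_ln ?posrE ?ltr0n // divr_gt0.
have drift_le : \sum_(i < K) (2 * delta) <= 2.
  move: K_le; rewrite sumr_const card_ord -[_ *+ K]mulr_natr ler_pdivlMr //.
  by set k := (K%:R : R) => ?; lra.
rewrite big_split /=; set H := \sum_(i < K) _ in harmonic_le *.
set D := \sum_(i < K) _ in drift_le *.
have : C0 * (H + D) <= C0 * (3 + ln (1 / delta)) by rewrite ler_wpM2l //; lra.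
lra.
Qed.

Lemma lemma9_beta_gt1 (beta : R) : 1 < beta ->
  exists Cb : R,
  forall (delta : R) (T : nat) (G : probability R R) (c0 C0 : R),
    0 < delta -> beta_regular G beta c0 C0 ->
    (lemma9_lhs G delta T <= (C0 * Cb)%:E)%E.
Proof.
move=> beta_gt1; set q := 2 `^ (1 - beta).
have q_ge0 : 0 <= q by exact: powR_ge0.
have q_lt1 : q < 1 by apply: powR_lt1; lra.
exists (6 + 3 * (3 / 2) `^ beta * (q / (1 - q))) => delta T G c0 C0 delta_gt0 G_reg.
have C0_ge1 := beta_regular_C0_ge1 G_reg.
set N := Num.truncn (1 / delta).
have g_le (mu : R) : lemma9_integrand delta T mu <= 3 * 2 ^+ N.+1.
  apply/ltW/(lt_le_trans (integrand_lt _ _ mu delta_gt0)).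
  have : 1 / delta < 2 ^+ N.+1.
    by apply: lt_trans (truncnS_gt _) _; rewrite -natrX ltr_nat ltn_expl.
  have : 1 <= 2 ^+ N.+1 :> R by rewrite exprn_ege1 // ler1n.
  by set p := (2 ^+ N.+1 : R) => *; lra.
apply: le_trans (lemma9_lhs_le_dyadic delta_gt0 G_reg g_le) _; rewrite lee_fin.
have sum_le := sum_exprS_le_lt1 _ N q_ge0 q_lt1.
set a := (3 / 2) `^ beta; have a_ge0 : 0 <= a by exact: powR_ge0.
set S := \sum_(i < N) _ in sum_le *; set B := q / (1 - q) in sum_le *.
have : C0 * a * S <= C0 * a * B by rewrite ler_wpM2l // mulr_ge0 //; lra.
lra.
Qed.

Lemma lemma9_beta_lt1 (beta : R) : beta < 1 ->
  exists Cb : R,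
  forall (delta : R) (T : nat) (G : probability R R) (c0 C0 : R),
    0 < delta -> (0 < T)%N -> beta_regular G beta c0 C0 ->
    (lemma9_lhs G delta T <=
       ((C0 * (Cb * (Order.min (Num.sqrt T%:R) (1 / delta)) `^ (1 - beta)))%R)%:E)%E.
Proof.
move=> beta_lt1; set q := 2 `^ (1 - beta).
have q_gt1 : 1 < q by apply: powR_gt1; lra.
set a := (3 / 2) `^ beta; have a_ge0 : 0 <= a by exact: powR_ge0.
set F := 4 `^ (1 - beta); have F_ge0 : 0 <= F by exact: powR_ge0.
set D := (q - 1)^-1; have D_gt0 : 0 < D by rewrite invr_gt0; lra.
have Cb_ge0 : 0 <= 6 + 3 * a * F * D by rewrite addr_ge0 // !mulr_ge0 // ltW.
exists (6 + 3 * a * F * D) => delta T G c0 C0 delta_gt0 T_gt0 G_reg.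
have C0_ge1 := beta_regular_C0_ge1 G_reg.
have G01 : on_unit_interval G by case: G_reg.
set M := Order.min (Num.sqrt T%:R) (1 / delta).
have [delta_ge|delta_lt] := leP 1 (3 * delta).
  apply: le_trans (lemma9_lhs_le0 delta_gt0 delta_ge G01) _.
  by rewrite lee_fin mulr_ge0 ?mulr_ge0 ?powR_ge0 //; lra.
have M_ge1 : 1 <= M.
  rewrite le_min -[X in X <= Num.sqrt _]sqrtr1 ler_sqrt // ler1n T_gt0 /=.
  by rewrite ler_pdivlMr // mul1r; lra.
have [n /andP[pow_le pow_gt]] := exists_expr2_le_lt _ M_ge1.
have g_le (mu : R) : lemma9_integrand delta T mu <= 3 * 2 ^+ n.+2.
  apply: le_trans (integrand_le_min _ _ mu delta_gt0) _; rewrite -/M [2 ^+ n.+2]exprS.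
  have : 1 <= 2 ^+ n.+1 :> R by rewrite exprn_ege1 // ler1n.
  by set p := (2 ^+ n.+1 : R) in pow_gt * => *; lra.
apply: le_trans (lemma9_lhs_le_dyadic delta_gt0 G_reg g_le) _; rewrite lee_fin.
have sum_le := sum_exprS_le_gt1 _ n.+1 q_gt1.
have qpow_le : q ^+ n.+2 <= F * M `^ (1 - beta).
  rewrite /q -powR_exprn // -powRM; last 2 first.
  - by [].
  - by lra.
  apply: ge0_ler_powR; rewrite ?nnegrE ?exprn_ge0 //; try lra.
  by rewrite !exprS mulrA; set p := (2 ^+ n : R) in pow_le *; lra.
set Mp := M `^ (1 - beta) in qpow_le *.
have Mp_ge1 : 1 <= Mp by apply: powR_ge1; lra.
set S := \sum_(i < n.+1) _ in sum_le *.
have S_le : C0 * a * S <= C0 * a * (F * Mp * D).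
  rewrite ler_wpM2l ?mulr_ge0 //; first lra.
  by apply: le_trans sum_le _; rewrite ler_wpM2r // ltW.
have : 1 <= C0 * Mp by rewrite -[1]mulr1 ler_pM.
rewrite -/a; lra.
Qed.

End lemma9_cases.

Theorem lemma9 (R : realType) :
  (* beta = 1 *)
  (forall (delta : R) (T : nat) (G : probability R R) (c0 C0 : R),
     0 < delta -> delta < 1 -> (0 < T)%N -> beta_regular G 1 c0 C0 ->
     (lemma9_lhs G delta T <= (C0 * (5 + ln (1 / delta)))%:E)%E) /\
  (* beta > 1 *)
  (forall beta : R, 1 < beta ->
     exists Cb : R,
     forall (delta : R) (T : nat) (G : probability R R) (c0 C0 : R),
       0 < delta -> (0 < T)%N -> beta_regular G beta c0 C0 ->
       (lemma9_lhs G delta T <= (C0 * Cb)%:E)%E) /\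
  (* beta < 1 *)
  (forall beta : R, beta < 1 ->
     exists Cb : R,
     forall (delta : R) (T : nat) (G : probability R R) (c0 C0 : R),
       0 < delta -> (0 < T)%N -> beta_regular G beta c0 C0 ->
       (lemma9_lhs G delta T <=
          ((C0 * (Cb * (Order.min (Num.sqrt T%:R) (1 / delta)) `^ (1 - beta)))%R)%:E)%E).
Proof.
split.
  move=> delta T G c0 C0 delta_gt0 delta_lt1 _.
  exact: lemma9_beta_eq1.
split; last exact: lemma9_beta_lt1.
move=> beta /lemma9_beta_gt1 [Cb lhs_le]; exists Cb.
by move=> delta T G c0 C0 delta_gt0 _; exact: lhs_le.
Qed.
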